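(* Let $X$ be a $d$-dimensional Minkowski space and $A\subset X$ finite. For each point $\mathbf{p}\in A\cap\mathrm{FT}(A)$, $\mathbf{p}$ is a vertex of $\operatorname{conv}(A\cap\mathrm{FT}(A))$, and the set $\left\{\frac{\mathbf{q}-\mathbf{p}}{\|\mathbf{q}-\mathbf{p}\|} : \mathbf{q}\in A\cap\mathrm{FT}(A),\ \mathbf{q}\neq\mathbf{p}\right\}$ is contained in a proper exposed face of the unit ball.
   Context: A Minkowski space is a finite-dimensional real normed space $(X,\|\cdot\|)$ with unit ball $B$. A proper exposed face of $B$ is the intersection of $B$ with a supporting hyperplane of $B$. For finite $A$, $\mathrm{FT}(A)$ is the set of minimizers of $\mathbf{x}\mapsto\sum_{\mathbf{a}\in A}\|\mathbf{x}-\mathbf{a}\|$. *)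

From HB Require Import structures.
From mathcomp Require Import all_boot all_order all_algebra.
From mathcomp Require Import reals.
Set Implicit Arguments. Unset Strict Implicit. Unset Printing Implicit Defensive.
Import Order.TTheory GRing.Theory Num.Theory.
Local Open Scope ring_scope.

Section Minkowski.
Variables (R : realType) (d : nat).
Local Notation V := 'rV[R]_d.

(* N is a norm on V = R^d; (V, N) is then a d-dimensional Minkowski space. *)
Definition is_norm (N : V -> R) : Prop :=
  [/\ (forall x, N x = 0 -> x = 0),
      (forall (a : R) x, N (a *: x) = `|a| * N x) &
      (forall x y, N (x + y) <= N x + N y)].

Definition lfun (u x : V) : R := \sum_(i < d) u ord0 i * x ord0 i.

Definition unit_ball (N : V -> R) (x : V) : Prop := N x <= 1.

Definition proper_exposed_face (N : V -> R) (F : V -> Prop) : Prop :=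
  exists (u : V) (c : R),
    [/\ u != 0,
        (forall x, unit_ball N x -> lfun u x <= c),
        (forall x, F x <-> (unit_ball N x /\ lfun u x = c)),
        (exists x, F x) &
        (exists x, unit_ball N x /\ ~ F x)].

Definition FT (N : V -> R) (A : seq V) (x : V) : Prop :=
  forall y : V, \sum_(a <- A) N (x - a) <= \sum_(a <- A) N (y - a).

Definition conv (S : V -> Prop) (x : V) : Prop :=
  exists (s : seq V) (w : V -> R),
    [/\ (forall v, v \in s -> S v),
        (forall v, 0 <= w v),
        \sum_(v <- s) w v = 1 &
        x = \sum_(v <- s) w v *: v].

Definition vertex (C : V -> Prop) (p : V) : Prop :=
  C p /\ forall x y (t : R), C x -> C y -> 0 < t < 1 ->
    p = t *: x + (1 - t) *: y -> x = p /\ y = p.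

End Minkowski.

From HB Require Import structures.
From mathcomp Require Import all_boot all_order all_algebra.
From mathcomp Require Import reals boolp classical_sets lra.
Set Implicit Arguments. Unset Strict Implicit. Unset Printing Implicit Defensive.
Import Order.TTheory GRing.Theory Num.Theory.
Local Open Scope ring_scope.

(* Let S = A ∩ FT(A) and f = Σ_a ‖· − a‖. The centroid m of S satisfies
   f(m) <= mean of f over S = min f, so each triangle inequality
   ‖m − a‖ <= mean_q ‖q − a‖ is an equality; at a = p this reads
   ‖Σ_{q∈S} (q − p)‖ = Σ_{q∈S} ‖q − p‖. A linear functional u <= ‖·‖ norming
   that sum then norms every summand: u(q − p) = ‖q − p‖. Hence the unit
   vectors (q − p)/‖q − p‖ lie in the exposed face {u = 1} of B, and u(· − p)
   vanishes on conv S only at p, so p is a vertex.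
   The functional u comes from a finite-dimensional Hahn–Banach theorem: a
   sublinear q is made additive along a direction e, without increasing it, by
   q_e(x) = inf_t (q(x + t e) − t q(e)); doing this along v and then along each
   coordinate direction yields a linear functional below q, equal to q at v. *)

Lemma psumr_le0_eq0 (R : numDomainType) (I : eqType) (s : seq I) (F : I -> R) :
  (forall i, i \in s -> 0 <= F i) -> \sum_(i <- s) F i <= 0 ->
  forall i, i \in s -> F i = 0.
Proof.
move=> F_ge0 sum_le0 i si; have : \sum_(j <- s | j \in s) F j == 0.
  by rewrite -big_seq eq_le sum_le0 big_seq sumr_ge0.
by rewrite psumr_eq0 // => /allP/(_ i si)/implyP/(_ si)/eqP.
Qed.

Section LinearFunctional.
Variables (R : realType) (d : nat).
Local Notation V := 'rV[R]_d.

Fact lfun_is_linear (u : V) : linear_for *%R (lfun u).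
Proof.
move=> a x y; rewrite /lfun mulr_sumr -big_split; apply: eq_bigr => i _.
by rewrite !mxE mulrDr mulrCA.
Qed.

HB.instance Definition _ (u : V) :=
  GRing.isLinear.Build R V R *%R (lfun u) (lfun_is_linear u).

Lemma lfun0l (x : V) : lfun 0 x = 0.
Proof. by rewrite /lfun big1 // => i _; rewrite mxE mul0r. Qed.

End LinearFunctional.

Section HahnBanach.
Variables (R : realType) (d : nat).
Local Notation V := 'rV[R]_d.
Implicit Types (q : V -> R) (e f x y : V).

Definition sublinear q :=
  (forall x y, q (x + y) <= q x + q y) /\
  (forall a x, 0 <= a -> q (a *: x) = a * q x).

Definition additive_along q f := forall x s, q (x + s *: f) = q x + s * q f.

Lemma sublinear0 q : sublinear q -> q 0 = 0.
Proof. by case=> _ qZ; rewrite -(scale0r (0 : V)) qZ // mul0r. Qed.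

Lemma sublinearN q x : sublinear q -> - q x <= q (- x).
Proof. by move=> qsub; have := qsub.1 x (- x); rewrite subrr sublinear0 //; lra. Qed.

Lemma sublinear_scale_ge q t e : sublinear q -> t * q e <= q (t *: e).
Proof.
move=> qsub; have [t_ge0|t_lt0] := leP 0 t; first by rewrite qsub.2.
have -> : t *: e = (- t) *: (- e) by rewrite scalerN scaleNr opprK.
rewrite qsub.2; last lra.
have := sublinearN e qsub; nra.
Qed.

Section Straighten.
Variables (q : V -> R) (qsub : sublinear q) (e : V).

Definition straighten x := inf (range (fun t => q (x + t *: e) - t * q e)).

Lemma straighten_ray_ge x t : - q (- x) <= q (x + t *: e) - t * q e.
Proof.
have := qsub.1 (x + t *: e) (- x); rewrite addrAC subrr add0r.
have := sublinear_scale_ge t e qsub; lra.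
Qed.

Lemma straighten_le_ray x t : straighten x <= q (x + t *: e) - t * q e.
Proof.
apply: ge_inf; last by exists t.
by exists (- q (- x)) => _ [s _ <-]; apply: straighten_ray_ge.
Qed.

Lemma straighten_ge (c : R) x :
  (forall t, c <= q (x + t *: e) - t * q e) -> c <= straighten x.
Proof.
move=> c_le; apply: lb_le_inf => [|_ [t _ <-] //].
by exists (q (x + 0 *: e) - 0 * q e), 0.
Qed.

Lemma straighten_le x : straighten x <= q x.
Proof. by have := straighten_le_ray x 0; rewrite scale0r addr0 mul0r subr0. Qed.

Lemma straighten0 : straighten 0 = 0.
Proof.
apply/le_anti/andP; split; first by rewrite -{1}(sublinear0 qsub) straighten_le.
apply: straighten_ge => t; have := straighten_ray_ge 0 t.
by rewrite oppr0 (sublinear0 qsub) oppr0.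
Qed.

Lemma straighten_shift x s : straighten (x + s *: e) = straighten x + s * q e.
Proof.
apply/le_anti/andP; split.
  rewrite -lerBlDr; apply: straighten_ge => t.
  have := straighten_le_ray (x + s *: e) (t - s).
  by rewrite -addrA -scalerDl addrCA subrr addr0; lra.
apply: straighten_ge => t; have := straighten_le_ray x (s + t).
by rewrite scalerDl addrA; lra.
Qed.

Lemma straighten_line s : straighten (s *: e) = s * q e.
Proof. by rewrite -[s *: e]add0r straighten_shift straighten0 add0r. Qed.

Lemma straighten_additive : additive_along straighten e.
Proof.
by move=> x s; rewrite straighten_shift -[e]scale1r straighten_line mul1r scale1r.
Qed.

Lemma straighten_subadditive x y :
  straighten (x + y) <= straighten x + straighten y.
Proof.
rewrite -lerBlDr; apply: straighten_ge => t1.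
rewrite lerBlDl -lerBlDr; apply: straighten_ge => t2.
have := straighten_le_ray (x + y) (t1 + t2).
have := qsub.1 (x + t1 *: e) (y + t2 *: e).
rewrite addrACA -scalerDl; lra.
Qed.

Lemma straighten_homogeneous a x :
  0 <= a -> straighten (a *: x) = a * straighten x.
Proof.
rewrite le_eqVlt => /predU1P[<-|a_gt0]; first by rewrite scale0r mul0r straighten0.
apply/le_anti/andP; split.
  rewrite -ler_pdivrMl //; apply: straighten_ge => t.
  rewrite ler_pdivrMl // mulrBr mulrA -(qsub.2 _ _ (ltW a_gt0)) scalerDr scalerA.
  exact: straighten_le_ray.
apply: straighten_ge => t.
have -> : a *: x + t *: e = a *: (x + (t / a) *: e).
  by rewrite scalerDr scalerA mulrCA mulfV ?gt_eqF // mulr1.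
have -> : t * q e = a * (t / a * q e) by rewrite mulrA mulrCA mulfV ?gt_eqF // mulr1.
by rewrite (qsub.2 _ _ (ltW a_gt0)) -mulrBr ler_pM2l // straighten_le_ray.
Qed.

Lemma straighten_sublinear : sublinear straighten.
Proof. by split; [apply: straighten_subadditive | apply: straighten_homogeneous]. Qed.

Lemma straighten_additive_along f : additive_along q f -> additive_along straighten f.
Proof.
move=> qf; have shift x s : straighten (x + s *: f) = straighten x + s * q f.
  apply/le_anti/andP; split.
    rewrite -lerBlDr; apply: straighten_ge => t.
    have := straighten_le_ray (x + s *: f) t; rewrite addrAC qf; lra.
  apply: straighten_ge => t; rewrite addrAC qf.
  have := straighten_le_ray x t; lra.
move=> x s; rewrite shift; congr (_ + _ * _).
by have := shift 0 1; rewrite add0r scale1r straighten0 add0r mul1r.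
Qed.

End Straighten.

Definition straighten_coords (s : seq 'I_d) q :=
  foldl (fun q i => straighten q 'e_i) q s.

Lemma straighten_coords_sublinear s q :
  sublinear q -> sublinear (straighten_coords s q).
Proof. by elim: s q => [|i s IH] q qsub //=; apply/IH/straighten_sublinear. Qed.

Lemma straighten_coords_le s q x : sublinear q -> straighten_coords s q x <= q x.
Proof.
elim: s q => [|i s IH] q qsub //=.
exact: le_trans (IH _ (straighten_sublinear qsub 'e_i)) (straighten_le _ _ _).
Qed.

Lemma straighten_coords_additive_along s q f :
  sublinear q -> additive_along q f -> additive_along (straighten_coords s q) f.
Proof.
elim: s q => [|i s IH] q qsub qf //=.
by apply: IH; [apply: straighten_sublinear | apply: straighten_additive_along].
Qed.

Lemma straighten_coords_additive s q i : sublinear q -> i \in s ->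
  additive_along (straighten_coords s q) 'e_i.
Proof.
elim: s q => [|j s IH] q qsub //=; rewrite in_cons => /predU1P[->|si].
  by apply: straighten_coords_additive_along;
    [apply: straighten_sublinear | apply: straighten_additive].
by apply: IH => //; apply: straighten_sublinear.
Qed.

Lemma additive_coords_lfun l : sublinear l -> (forall i, additive_along l 'e_i) ->
  forall x, l x = lfun (\row_i l 'e_i) x.
Proof.
move=> lsub ladd x; rewrite /lfun.
under eq_bigr => i _ do rewrite mxE mulrC.
rewrite {1}(row_sum_delta x); elim: (index_enum _) => [|i s IH].
  by rewrite !big_nil sublinear0.
by rewrite !big_cons addrC ladd IH addrC.
Qed.

Theorem sublinear_supporting_lfun q v : sublinear q ->
  exists u : V, (forall x, lfun u x <= q x) /\ lfun u v = q v.
Proof.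
move=> qsub; pose q0 := straighten q v; pose l := straighten_coords (enum 'I_d) q0.
have q0sub : sublinear q0 by apply: straighten_sublinear.
have lsub : sublinear l by apply: straighten_coords_sublinear.
have l_le x : l x <= q0 x by apply: straighten_coords_le.
have lE := additive_coords_lfun lsub
  (fun i => straighten_coords_additive q0sub (mem_enum _ i)).
exists (\row_i l 'e_i); split=> [x|]; rewrite -lE.
  exact: le_trans (l_le x) (straighten_le _ _ _).
have q0v : q0 v = q v by have := straighten_line qsub v 1; rewrite scale1r mul1r.
have q0Nv : q0 (- v) = - q v.
  by have := straighten_line qsub v (-1); rewrite scaleN1r mulN1r.
have := l_le v; have := l_le (- v); have := sublinearN v lsub; lra.
Qed.

End HahnBanach.

Section Norm.
Variables (R : realType) (d : nat) (N : 'rV[R]_d -> R) (hN : is_norm N).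
Local Notation V := 'rV[R]_d.

Lemma normv_eq0 x : N x = 0 -> x = 0.
Proof. by case: hN => N_eq0 _ _; apply: N_eq0. Qed.

Lemma normvZ a x : N (a *: x) = `|a| * N x.
Proof. by case: hN => _ NZ _; apply: NZ. Qed.

Lemma normvD x y : N (x + y) <= N x + N y.
Proof. by case: hN => _ _ ND; apply: ND. Qed.

Lemma normv0 : N 0 = 0.
Proof. by rewrite -(scale0r (0 : V)) normvZ normr0 mul0r. Qed.

Lemma normv_ge0 x : 0 <= N x.
Proof.
have := normvD x (- x); rewrite subrr normv0 -scaleN1r normvZ normrN1; lra.
Qed.

Lemma normv_gt0 x : x != 0 -> 0 < N x.
Proof.
by move=> x0; rewrite lt_def normv_ge0 andbT; apply: contra_neq x0 => /normv_eq0.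
Qed.

Lemma normv_sublinear : sublinear N.
Proof. by split=> [|a x a0]; [apply: normvD | rewrite normvZ ger0_norm]. Qed.

Lemma normv_sum (I : Type) (s : seq I) (F : I -> V) :
  N (\sum_(i <- s) F i) <= \sum_(i <- s) N (F i).
Proof.
elim: s => [|i s IH]; first by rewrite !big_nil normv0.
by rewrite !big_cons; apply: le_trans (normvD _ _) _; rewrite lerD2l.
Qed.

Lemma normv_normalize v : v != 0 -> N ((N v)^-1 *: v) = 1.
Proof.
move=> v0; have Nv_gt0 := normv_gt0 v0.
by rewrite normvZ ger0_norm ?invr_ge0 ?ltW // mulVf ?gt_eqF.
Qed.

Definition ft_cost (A : seq V) y := \sum_(a <- A) N (y - a).

Lemma FT_triangle_eq (A S : seq V) p : p \in A -> FT N A p ->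
  (forall q, q \in S -> FT N A q) ->
  N (\sum_(q <- S) (q - p)) = \sum_(q <- S) N (q - p).
Proof.
move=> pA pFT SFT; have [->|S_neq0] := eqVneq S [::].
  by rewrite !big_nil normv0.
pose k : R := (size S)%:R; have k_gt0 : 0 < k by rewrite ltr0n lt0n size_eq0.
have k_neq0 : k != 0 by rewrite gt_eqF.
pose m := k^-1 *: \sum_(q <- S) q.
have mB a : m - a = k^-1 *: \sum_(q <- S) (q - a).
  rewrite sumrB big_const_seq iter_addr_0 -scaler_nat scalerBr scalerA.
  by rewrite mulVf // scale1r.
pose mean a := k^-1 * \sum_(q <- S) N (q - a).
have m_le a : N (m - a) <= mean a.
  have kV_gt0 : 0 < k^-1 by rewrite invr_gt0.
  by rewrite /mean mB normvZ (ger0_norm (ltW kV_gt0)) ler_pM2l // normv_sum.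
have mean_cost : \sum_(a <- A) mean a = ft_cost A p.
  rewrite /mean -mulr_sumr exchange_big /=.
  have cost_eq q : q \in S -> ft_cost A q = ft_cost A p.
    by move=> qS; apply/le_anti; rewrite SFT // pFT.
  rewrite (eq_big_seq _ cost_eq) big_const_seq iter_addr_0 -mulr_natl.
  by rewrite mulrA mulVf // mul1r.
have gap_p : mean p - N (m - p) = 0.
  apply: (psumr_le0_eq0 (F := fun a => mean a - N (m - a))) pA => [a _|].
    by rewrite subr_ge0.
  by rewrite sumrB mean_cost subr_le0; apply: pFT.
have Nmp : N (m - p) = mean p by apply/esym/eqP; rewrite -subr_eq0 gap_p.
have -> : \sum_(q <- S) (q - p) = k *: (m - p) by rewrite mB scalerA mulfV // scale1r.
by rewrite normvZ ger0_norm ?(ltW k_gt0) // Nmp /mean mulrA mulfV // mul1r.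
Qed.

Lemma exists_norming_lfun (hd : (0 < d)%N) w : exists u v : V,
  [/\ v != 0, forall x, lfun u x <= N x, lfun u v = N v & lfun u w = N w].
Proof.
pose v : V := if w == 0 then 'e_(Ordinal hd) else w.
have v_neq0 : v != 0.
  rewrite /v; case: (eqVneq w 0) => // _; apply/eqP => /matrixP/(_ 0 (Ordinal hd)).
  by rewrite !mxE !eqxx => /eqP; rewrite oner_eq0.
have [u [u_le uv]] := sublinear_supporting_lfun v normv_sublinear.
exists u, v; split => //; move: uv; rewrite /v.
by case: (eqVneq w 0) => [-> _|//]; rewrite linear0 normv0.
Qed.

Lemma lfun_norming_summands (u : V) (I : eqType) (s : seq I) (F : I -> V) :
  (forall x, lfun u x <= N x) ->
  N (\sum_(i <- s) F i) = \sum_(i <- s) N (F i) ->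
  lfun u (\sum_(i <- s) F i) = N (\sum_(i <- s) F i) ->
  forall i, i \in s -> lfun u (F i) = N (F i).
Proof.
move=> u_le sum_eq u_sum i si; apply/eqP; rewrite eq_sym -subr_eq0; apply/eqP.
apply: (psumr_le0_eq0 (F := fun i => N (F i) - lfun u (F i))) si => [j _|].
  by rewrite subr_ge0.
by rewrite sumrB -sum_eq -linear_sum /= u_sum subrr.
Qed.

Lemma norming_face (u v : V) : (forall x, lfun u x <= N x) -> v != 0 ->
  lfun u v = N v -> proper_exposed_face N (fun x => unit_ball N x /\ lfun u x = 1).
Proof.
move=> u_le v_neq0 uv; have Nv_gt0 := normv_gt0 v_neq0.
exists u, 1; split => //.
- by apply: contraTneq Nv_gt0 => u0; rewrite -uv u0 lfun0l ltxx.
- by move=> x; apply: le_trans.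
- exists ((N v)^-1 *: v); split; first by rewrite /unit_ball normv_normalize.
  by rewrite linearZ /= uv mulVf ?gt_eqF.
- exists 0; rewrite /unit_ball normv0 linear0.
  by split=> // -[_ /eqP]; rewrite eq_sym oner_eq0.
Qed.

Section Vertex.
Variables (S : V -> Prop) (p u : V).
Hypothesis u_norms : forall q, S q -> lfun u (q - p) = N (q - p).

Lemma conv_lfun_ge0 x : conv S x ->
  0 <= lfun u (x - p) /\ (lfun u (x - p) = 0 -> x = p).
Proof.
move=> [s [w [sS w_ge0 w_sum1 ->]]].
have xpE : \sum_(v <- s) w v *: v - p = \sum_(v <- s) w v *: (v - p).
  rewrite -{1}(scale1r p) -w_sum1 scaler_suml -sumrB.
  by apply: eq_bigr => v _; rewrite scalerBr.
have term_eq v : v \in s -> lfun u (w v *: (v - p)) = w v * N (v - p).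
  by move=> vs; rewrite linearZ /= u_norms //; apply: sS.
have term_ge0 v : v \in s -> 0 <= lfun u (w v *: (v - p)).
  by move=> vs; rewrite term_eq // mulr_ge0 // normv_ge0.
rewrite xpE linear_sum /=; split; first by rewrite big_seq sumr_ge0.
move=> sum0; apply/eqP; rewrite -subr_eq0 xpE big_seq big1 // => v vs.
have := psumr_le0_eq0 term_ge0 (ltac:(by rewrite sum0)) vs.
rewrite term_eq // => /eqP; rewrite mulf_eq0 => /orP[/eqP ->|/eqP /normv_eq0 ->].
  by rewrite scale0r.
by rewrite scaler0.
Qed.

Lemma vertex_of_norming : S p -> vertex (conv S) p.
Proof.
move=> Sp; split.
  by exists [:: p], (fun=> 1); rewrite !big_seq1 scale1r; split=> // v /[1!inE] /eqP ->.
move=> x y t Sx Sy /andP[t_gt0 t_lt1] pE.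
have [x_ge0 x_eq] := conv_lfun_ge0 Sx; have [y_ge0 y_eq] := conv_lfun_ge0 Sy.
have : t * lfun u (x - p) + (1 - t) * lfun u (y - p) = 0.
  rewrite -!linearZ -linearD /= !scalerBr addrACA -opprD -scalerDl subrKC.
  by rewrite scale1r -pE subrr linear0.
move=> comb0; split; [apply: x_eq | apply: y_eq]; nra.
Qed.

End Vertex.

End Norm.

Theorem lemma4p14 (R : realType) (d : nat) (N : 'rV[R]_d -> R)
    (hN : is_norm N) (hd : (0 < d)%N)
    (A : seq 'rV[R]_d) (hA : uniq A) (p : 'rV[R]_d) :
  p \in A -> FT N A p ->
  vertex (conv (fun q => q \in A /\ FT N A q)) p /\
  exists F : 'rV[R]_d -> Prop,
    proper_exposed_face N F /\
    forall q, q \in A -> FT N A q -> q != p -> F ((N (q - p))^-1 *: (q - p)).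
Proof.
move=> pA pFT; set S := [seq q <- A | `[< FT N A q >]].
have memS q : q \in A -> FT N A q -> q \in S.
  by move=> qA qFT; rewrite mem_filter qA andbT; apply/asboolP.
have S_FT q : q \in S -> FT N A q by rewrite mem_filter => /andP[/asboolP].
have S_eq := FT_triangle_eq hN pA pFT S_FT.
have [u [v [v_neq0 u_le uv uw]]] :=
  exists_norming_lfun hN hd (\sum_(q <- S) (q - p)).
have u_norms q : q \in A /\ FT N A q -> lfun u (q - p) = N (q - p).
  by move=> [qA qFT]; apply: (lfun_norming_summands u_le S_eq uw (memS _ qA qFT)).
split; first exact: (vertex_of_norming hN u_norms).
exists (fun x => unit_ball N x /\ lfun u x = 1).
split=> [|q qA qFT qp]; first exact: norming_face uv.
have qp_neq0 : q - p != 0 by rewrite subr_eq0.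
split; first by rewrite /unit_ball normv_normalize.
by rewrite linearZ /= u_norms // mulVf // gt_eqF // normv_gt0.
Qed.
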